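(* Consider the equation $u_{tx}=2u_yu_{xx}+4u_xu_{xy}-u_{xxxy}$ and the hierarchy of symmetries $\{\chi_{2k+1}\}_{k\ge0}$ defined by $\chi_1=u_x$ and $\mathcal{R}_0(\chi_{2k+1})=-\chi_{2k+3}$, where $\Psi=\mathcal{R}_0(\Phi)$ iff $\Psi_x=4u_x\Phi_x+2u_{xx}\Phi-\Phi_{xxx}$, $\Psi_y=\Phi_t-2u_y\Phi_x+2u_{xy}\Phi$. Then this hierarchy is commutative: the Jacobi bracket $\{\chi_{2i+1},\chi_{2j+1}\}$ vanishes for all $i,j\ge 0$.
   Context: Symmetries are generating functions $\phi$ satisfying the linearized equation $D_xD_t\phi-2u_{xx}D_y\phi-2u_yD_x^2\phi-4u_{xy}D_x\phi-4u_xD_xD_y\phi+D_x^3D_y\phi=0$ on solutions. The symmetries $\chi_{2k+1}$ are local functions of $u$ and its $x$-derivatives (e.g. $\chi_3=u_{xxx}-3u_x^2$). The Jacobi bracket of generating functions $\phi_1,\phi_2$ is $\{\phi_1,\phi_2\}=\sum_\sigma\big(D_\sigma(\phi_1)\partial\phi_2/\partial u_\sigma-D_\sigma(\phi_2)\partial\phi_1/\partial u_\sigma\big)$, the generating function of the commutator of the evolutionary vector fields $\mathrm{Ev}_{\phi_1},\mathrm{Ev}_{\phi_2}$. *)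

(* Differential polynomials in the jet variables
   u_{x^i y^j t^k}, modelled as syntactic expressions with coefficients in a
   real field R, interpreted as polynomial functions on the (infinite) jet
   space.  "On solutions" = on the infinite prolongation of the equation. *)
From HB Require Import structures.
From mathcomp Require Import all_boot all_order all_algebra.
Set Implicit Arguments. Unset Strict Implicit. Unset Printing Implicit Defensive.
Import Order.TTheory GRing.Theory Num.Theory.
Local Open Scope ring_scope.

Section Jets.
Variable R : realFieldType.

(* Var i j k  stands for  u_{x^i y^j t^k} *)
Inductive dexp : Type :=
| Cst of R
| Var of nat & nat & nat
| Add of dexp & dexp
| Mul of dexp & dexp.

Definition Opp (e : dexp) := Mul (Cst (-1)) e.
Definition Sub (a b : dexp) := Add a (Opp b).

Definition jet := nat -> nat -> nat -> R.

Fixpoint eval (J : jet) (e : dexp) : R :=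
  match e with
  | Cst c => c
  | Var i j k => J i j k
  | Add a b => eval J a + eval J b
  | Mul a b => eval J a * eval J b
  end.

(* total derivative in the direction (dx,dy,dt) (a unit vector) *)
Fixpoint Dtot (dx dy dt : nat) (e : dexp) : dexp :=
  match e with
  | Cst _ => Cst 0
  | Var i j k => Var (i + dx) (j + dy) (k + dt)
  | Add a b => Add (Dtot dx dy dt a) (Dtot dx dy dt b)
  | Mul a b => Add (Mul (Dtot dx dy dt a) b) (Mul a (Dtot dx dy dt b))
  end.

Definition Dx := Dtot 1 0 0.
Definition Dy := Dtot 0 1 0.
Definition Dt := Dtot 0 0 1.

Definition Dsig (i j k : nat) (e : dexp) : dexp :=
  iter i Dx (iter j Dy (iter k Dt e)).

Fixpoint pd (i j k : nat) (e : dexp) : dexp :=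
  match e with
  | Cst _ => Cst 0
  | Var a b c => if (a == i) && (b == j) && (c == k) then Cst 1 else Cst 0
  | Add a b => Add (pd i j k a) (pd i j k b)
  | Mul a b => Add (Mul (pd i j k a) b) (Mul a (pd i j k b))
  end.

Fixpoint vars (e : dexp) : seq (nat * nat * nat) :=
  match e with
  | Cst _ => [::]
  | Var i j k => [:: (i, j, k)]
  | Add a b => vars a ++ vars b
  | Mul a b => vars a ++ vars b
  end.

(* Jacobi bracket:  sum_sigma D_sigma(p) dq/du_sigma - D_sigma(q) dp/du_sigma.
   Only sigma's occurring in p or q contribute. *)
Definition jacobi (p q : dexp) : dexp :=
  foldr (fun s acc =>
           let '(i, j, k) := s in
           Add (Sub (Mul (Dsig i j k p) (pd i j k q))
                    (Mul (Dsig i j k q) (pd i j k p))) acc)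
        (Cst 0) (undup (vars p ++ vars q)).

Definition u_x := Var 1 0 0.
Definition u_y := Var 0 1 0.
Definition u_xx := Var 2 0 0.
Definition u_xy := Var 1 1 0.

Definition Eqn : dexp :=
  Sub (Var 1 0 1)
      (Sub (Add (Mul (Cst 2) (Mul u_y u_xx)) (Mul (Cst 4) (Mul u_x u_xy)))
           (Var 3 1 0)).

Definition on_solutions (J : jet) : Prop :=
  forall i j k, eval J (Dsig i j k Eqn) = 0.

Definition eq_on_sol (a b : dexp) : Prop :=
  forall J, on_solutions J -> eval J a = eval J b.

Definition x_only (e : dexp) : Prop :=
  forall J J' : jet, (forall i, J i 0 0 = J' i 0 0) -> eval J e = eval J' e.

Definition R0_rel (Phi Psi : dexp) : Prop :=
  eq_on_sol (Dx Psi)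
    (Sub (Add (Mul (Cst 4) (Mul u_x (Dx Phi))) (Mul (Cst 2) (Mul u_xx Phi)))
         (Dx (Dx (Dx Phi)))) /\
  eq_on_sol (Dy Psi)
    (Add (Sub (Dt Phi) (Mul (Cst 2) (Mul u_y (Dx Phi))))
         (Mul (Cst 2) (Mul u_xy Phi))).

End Jets.

(* Identify each [chi_k] with its projection to the differential polynomials in [u_x, u_xx, ...].
   On the special solution jets [sol_jet], which agree with an arbitrary jet in the
   x-derivatives, the two halves of [R_0] say that [Dx chi_(k+1) = lenard chi_k], with
   [lenard f = f_xxx - 4 u_x f_x - 2 u_xx f], and that [chi_k] does not depend on [u] itself.
   For the Lenard sequence [G_0 = -1/2], [G_(k+1) = chi_k], induction on [K] gives
     [Ev_(G_L) G_K = 2 sum_(k < K) W(G_(K+L-1-k), G_k)],   [W(a, b) = a b_x - b a_x]: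
   both sides are x-polynomials with the same x-derivative (Lenard's identity plus a
   telescoping sum) and the same value at the zero jet, and the kernel of [Dx] on
   x-polynomials consists of constants.  The sum is symmetric in [K] and [L], since the
   terms with [K <= k < L] cancel in pairs, so [Ev_(G_L) G_K = Ev_(G_K) G_L] and the Jacobi
   bracket, their difference, vanishes.
   Identities are checked pointwise on the jet space; partial and total derivatives respect
   them because a polynomial over an infinite field is determined by its values. *)

From Pilot Require Import Defs.
From HB Require Import structures.
From mathcomp Require Import all_boot all_order all_algebra ring zify.
From mathcomp Require Import polyorder.
Set Implicit Arguments. Unset Strict Implicit. Unset Printing Implicit Defensive.
Import Order.TTheory GRing.Theory Num.Theory.
Local Open Scope ring_scope.

Lemma subset_cat (T : eqType) (s1 s2 l : seq T) :
  {subset s1 ++ s2 <= l} -> {subset s1 <= l} /\ {subset s2 <= l}.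
Proof. by move=> sl; split=> x x_in; apply: sl; rewrite mem_cat x_in ?orbT. Qed.

Section Jets.
Variable R : realFieldType.
Local Notation E := (dexp R).
Local Notation jetR := (jet R).

Definition eqv (a b : E) := forall J : jetR, eval J a = eval J b.

Lemma eval_Sub (J : jetR) (a b : E) : eval J (Defs.Sub a b) = eval J a - eval J b.
Proof. by rewrite /= mulN1r. Qed.

Lemma eq_eval_vars (J J' : jetR) (e : E) :
  (forall i j k, (i, j, k) \in vars e -> J i j k = J' i j k) -> eval J e = eval J' e.
Proof.
elim: e => //= [i j k|a IHa b IHb|a IHa b IHb] JJ'; first by apply: JJ'; rewrite inE.
all: by rewrite IHa ?IHb // => i j k ijk; apply: JJ'; rewrite mem_cat ijk ?orbT.
Qed.

Definition upd (J : jetR) i j k (v : R) : jetR :=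
  fun a b c => if (a == i) && (b == j) && (c == k) then v else J a b c.

Lemma eval_upd_id (J : jetR) i j k (e : E) : eval (upd J i j k (J i j k)) e = eval J e.
Proof.
apply: eq_eval_vars => a b c _; rewrite /upd.
by case: ifP => // /andP[/andP[/eqP-> /eqP->] /eqP->].
Qed.

Fixpoint eval_poly (J : jetR) i j k (e : E) : {poly R} :=
  match e with
  | Cst c => c%:P
  | Var a b c => if (a == i) && (b == j) && (c == k) then 'X else (J a b c)%:P
  | Add a b => eval_poly J i j k a + eval_poly J i j k b
  | Mul a b => eval_poly J i j k a * eval_poly J i j k b
  end.

Lemma horner_eval_poly (J : jetR) i j k (e : E) h :
  (eval_poly J i j k e).[h] = eval (upd J i j k h) e.
Proof.
elim: e => /= [c|a b c|a IHa b IHb|a IHa b IHb]; rewrite ?hornerE ?IHa ?IHb //.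
by rewrite /upd; case: ifP; rewrite ?hornerX ?hornerC.
Qed.

Lemma horner_deriv_eval_poly (J : jetR) i j k (e : E) h :
  (eval_poly J i j k e)^`().[h] = eval (upd J i j k h) (pd i j k e).
Proof.
elim: e => /= [c|a b c|a IHa b IHb|a IHa b IHb].
- by rewrite derivC hornerC.
- by case: ifP; rewrite ?derivX ?derivC hornerC.
- by rewrite derivD hornerD IHa IHb.
- by rewrite derivM hornerD !hornerM IHa IHb !horner_eval_poly.
Qed.

Lemma poly_horner_inj (p q : {poly R}) : (forall x, p.[x] = q.[x]) -> p = q.
Proof.
move=> pq; apply/eqP; rewrite -subr_eq0; apply/negPn/negP => /max_poly_roots.
have roots : all (root (p - q)) [seq i%:R | i <- iota 0 (size (p - q))].
  by apply/allP => x _; rewrite /root !hornerE pq subrr.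
have uniq_roots : uniq [seq i%:R : R | i <- iota 0 (size (p - q))].
  by rewrite map_inj_uniq ?iota_uniq // => m n /eqP; rewrite eqr_nat => /eqP.
by move=> /(_ _ roots uniq_roots); rewrite size_map size_iota ltnn.
Qed.

Lemma pd_eqv i j k (e e' : E) : eqv e e' -> eqv (pd i j k e) (pd i j k e').
Proof.
move=> ee' J; rewrite -[LHS](eval_upd_id J i j k) -[RHS](eval_upd_id J i j k).
rewrite -!horner_deriv_eval_poly.
by congr (_^`().[_]); apply: poly_horner_inj => h; rewrite !horner_eval_poly.
Qed.

Lemma eval_upd_pd_eq0 i j k (f : E) :
  eqv (pd i j k f) (Cst 0) -> forall (J : jetR) v, eval (upd J i j k v) f = eval J f.
Proof.
move=> f0 J v; set p := eval_poly J i j k f.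
have p'0 : p^`() = 0.
  by apply: poly_horner_inj => h; rewrite horner_deriv_eval_poly f0 hornerC.
have pC : p = (p`_0)%:P.
  by apply: size1_polyC; rewrite -subn_eq0 subn1 -size_deriv p'0 size_poly0.
by rewrite -horner_eval_poly -[RHS](eval_upd_id J i j k) -horner_eval_poly -/p pC !hornerC.
Qed.

Lemma eval_const_of_pd_eq0 (f : E) :
  (forall i j k, eqv (pd i j k f) (Cst 0)) -> forall J J' : jetR, eval J f = eval J' f.
Proof.
move=> f0.
have agree_off (l : seq (nat * nat * nat)) : forall J J' : jetR,
    (forall i j k, (i, j, k) \notin l -> J i j k = J' i j k) -> eval J f = eval J' f.
  elim: l => [|[[i j] k] l IHl] J J' JJ'.
    by apply: eq_eval_vars => a b c _; apply: JJ'.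
  rewrite -(eval_upd_pd_eq0 (f0 i j k) J (J' i j k)); apply: IHl => a b c abc.
  rewrite /upd; case: ifP => [/andP[/andP[/eqP-> /eqP->] /eqP->] //|ne].
  by apply: JJ'; rewrite inE negb_or abc andbT !xpair_eqE ne.
move=> J J'; pose J'' a b c := if (a, b, c) \in vars f then J' a b c else J a b c.
rewrite (agree_off (vars f) J J'') => [|a b c /negbTE abc]; last by rewrite /J'' abc.
by apply: eq_eval_vars => a b c abc; rewrite /J'' abc.
Qed.

Fixpoint Ev (g e : E) : E :=
  match e with
  | Cst _ => Cst 0
  | Var i j k => Dsig i j k g
  | Add a b => Add (Ev g a) (Ev g b)
  | Mul a b => Add (Mul (Ev g a) b) (Mul a (Ev g b))
  end.

Lemma eval_Ev_sum (g e : E) (l : seq (nat * nat * nat)) (J : jetR) :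
  uniq l -> {subset vars e <= l} ->
  eval J (Ev g e) =
  \sum_(s <- l) (let '(i, j, k) := s in eval J (Dsig i j k g) * eval J (pd i j k e)).
Proof.
move=> l_uniq; elim: e => /= [c|i j k|a IHa b IHb|a IHa b IHb] el.
- by rewrite big1 // => [[[i j] k]] _; rewrite mulr0.
- rewrite (eq_bigr (fun s => if s == (i, j, k) then eval J (Dsig i j k g) else 0)).
    by rewrite -big_mkcond -big_filter filter_pred1_uniq ?big_seq1 // el ?inE.
  move=> [[a b] c] _; rewrite [(a, b, c) == _]eq_sym !xpair_eqE.
  by case: ifP => [/andP[/andP[/eqP<- /eqP<-] /eqP<-]|_] /=; rewrite ?mulr1 ?mulr0.
- have [/IHa-> /IHb->] := subset_cat el; rewrite -big_split /=.
  by apply: eq_bigr => [[[i j] k]] _; rewrite mulrDr.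
- have [/IHa-> /IHb->] := subset_cat el; rewrite mulr_suml mulr_sumr -big_split /=.
  by apply: eq_bigr => [[[i j] k]] _; ring.
Qed.

Lemma eval_jacobi (p q : E) (J : jetR) :
  eval J (jacobi p q) = eval J (Ev p q) - eval J (Ev q p).
Proof.
have /subset_cat[pl ql] : {subset vars p ++ vars q <= undup (vars p ++ vars q)}.
  by move=> s; rewrite mem_undup.
rewrite (eval_Ev_sum _ _ (undup_uniq _) ql) (eval_Ev_sum _ _ (undup_uniq _) pl).
rewrite /jacobi -sumrB; elim: (undup _) => [|[[i j] k] l IHl] /=; first by rewrite big_nil.
by rewrite big_cons IHl mulN1r.
Qed.

Lemma Ev_eqv_r (g e e' : E) : eqv e e' -> eqv (Ev g e) (Ev g e').
Proof.
move=> ee' J.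
have /subset_cat[el e'l] : {subset vars e ++ vars e' <= undup (vars e ++ vars e')}.
  by move=> s; rewrite mem_undup.
rewrite (eval_Ev_sum _ _ (undup_uniq _) el) (eval_Ev_sum _ _ (undup_uniq _) e'l).
by apply: eq_bigr => [[[i j] k]] _; rewrite (pd_eqv _ _ _ ee').
Qed.

Lemma iter_Dtot_Var n dx dy dt a b c :
  iter n (Dtot dx dy dt) (Var R a b c) = Var R (a + n * dx) (b + n * dy) (c + n * dt).
Proof. by elim: n => [|n /= ->]; rewrite ?mul0n ?addn0 //; congr Var; lia. Qed.

Lemma Dsig_Var i j k a b c :
  Dsig i j k (Var R a b c) = Var R (a + i) (b + j) (c + k).
Proof. by rewrite /Dsig !iter_Dtot_Var !muln0 !muln1 !addn0. Qed.

Lemma Dtot_Ev dx dy dt (e : E) : eqv (Dtot dx dy dt e) (Ev (Var R dx dy dt) e).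
Proof.
move=> J; elim: e => //= [i j k|a -> b ->|a -> b ->] //.
by rewrite Dsig_Var [(dx + _)%N]addnC [(dy + _)%N]addnC [(dt + _)%N]addnC.
Qed.

Lemma Dtot_eqv dx dy dt (e e' : E) : eqv e e' -> eqv (Dtot dx dy dt e) (Dtot dx dy dt e').
Proof. by move=> ee' J; rewrite !Dtot_Ev; apply: Ev_eqv_r. Qed.

Lemma Dsig_eqv i j k (g g' : E) : eqv g g' -> eqv (Dsig i j k g) (Dsig i j k g').
Proof.
move=> gg'; rewrite /Dsig; elim: i => [|i IHi] /=; last exact: Dtot_eqv.
elim: j => [|j IHj] /=; last exact: Dtot_eqv.
by elim: k => [|k IHk] //=; apply: Dtot_eqv.
Qed.

Lemma Ev_eqv_l (g g' e : E) : eqv g g' -> eqv (Ev g e) (Ev g' e).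
Proof. by move=> gg' J; elim: e => //= [i j k|a -> b ->|a -> b ->] //; apply: Dsig_eqv. Qed.

Lemma Ev_Dx (g e : E) : eqv (Ev g (Dx e)) (Dx (Ev g e)).
Proof.
move=> J; elim: e => //= [i j k|a -> b ->|a IHa b IHb] //; first by rewrite addn1 !addn0.
by rewrite IHa IHb /=; ring.
Qed.

Definition jet0 : jetR := fun _ _ _ => 0.

Lemma eval_jet0_Dtot dx dy dt (e : E) : eval jet0 (Dtot dx dy dt e) = 0.
Proof. by elim: e => //= [a -> b ->|a -> b ->]; rewrite ?mulr0 ?mul0r addr0. Qed.

Lemma eval_jet0_Ev (g e : E) : eval jet0 (Ev g e) = eval jet0 g * eval jet0 (pd 0 0 0 e).
Proof.
elim: e => /= [c|[|i] [|j] [|k]|a -> b ->|a -> b ->]; rewrite ?mulr0 ?mulr1 //.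
all: try by rewrite /Dsig /= eval_jet0_Dtot.
by rewrite mulrDr.
ring.
Qed.

Fixpoint xpoly (e : E) : bool :=
  match e with
  | Cst _ => true
  | Var _ j k => (j == 0%N) && (k == 0%N)
  | Add a b | Mul a b => xpoly a && xpoly b
  end.

Lemma xpoly_Dx (e : E) : xpoly e -> xpoly (Dx e).
Proof.
elim: e => //= [a b c|a IHa b IHb|a IHa b IHb]; first by rewrite !addn0.
  by case/andP => /IHa-> /IHb->.
by case/andP=> a_x b_x; rewrite IHa ?IHb ?a_x ?b_x.
Qed.

Lemma xpoly_pd i j k (e : E) : xpoly e -> xpoly (pd i j k e).
Proof.
elim: e => //= [a b c|a IHa b IHb|a IHa b IHb]; first by case: ifP.
  by case/andP => /IHa-> /IHb->.
by case/andP=> a_x b_x; rewrite IHa ?IHb ?a_x ?b_x.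
Qed.

Lemma xpoly_Ev (g e : E) : xpoly g -> xpoly e -> xpoly (Ev g e).
Proof.
move=> g_x; elim: e => //= [a b c|a IHa b IHb|a IHa b IHb].
- case/andP=> /eqP-> /eqP->; rewrite /Dsig /=.
  by elim: a => //= a; apply: xpoly_Dx.
- by case/andP => /IHa-> /IHb->.
- by case/andP=> a_x b_x; rewrite IHa ?IHb ?a_x ?b_x.
Qed.

Lemma xpoly_vars (e : E) i j k : xpoly e -> (i, j, k) \in vars e -> j = 0%N /\ k = 0%N.
Proof.
elim: e => //= [a b c|a IHa b IHb|a IHa b IHb].
- by case/andP=> /eqP-> /eqP->; rewrite inE !xpair_eqE => /andP[/andP[_ /eqP->] /eqP->].
- by case/andP=> a_x b_x; rewrite mem_cat => /orP[/(IHa a_x)|/(IHb b_x)].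
- by case/andP=> a_x b_x; rewrite mem_cat => /orP[/(IHa a_x)|/(IHb b_x)].
Qed.

Lemma xpoly_x_only (e : E) : xpoly e -> x_only e.
Proof.
move=> e_x J J' JJ'; apply: eq_eval_vars => i j k ijk.
by have [-> ->] := xpoly_vars e_x ijk.
Qed.

Fixpoint xproj (e : E) : E :=
  match e with
  | Cst c => Cst c
  | Var i j k => if (j == 0%N) && (k == 0%N) then Var R i 0 0 else Cst 0
  | Add a b => Add (xproj a) (xproj b)
  | Mul a b => Mul (xproj a) (xproj b)
  end.

Lemma xpoly_xproj (e : E) : xpoly (xproj e).
Proof. by elim: e => //= [i j k|a -> b ->|a -> b ->] //; case: ifP. Qed.

Lemma x_only_eqv_xproj (e : E) : x_only e -> eqv e (xproj e).
Proof.
move=> e_x J; pose Jx (i j k : nat) := if (j == 0%N) && (k == 0%N) then J i 0%N 0%N else 0.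
have -> : eval J (xproj e) = eval Jx e.
  by elim: e {e_x} => //= [i j k|a -> b ->|a -> b ->] //; rewrite /Jx; case: ifP.
by apply: e_x => i; rewrite /Jx !eqxx.
Qed.

Lemma pd_Dx_succ i j k (e : E) :
  eqv (pd i.+1 j k (Dx e)) (Add (Dx (pd i.+1 j k e)) (pd i j k e)).
Proof.
move=> J; rewrite /Dx; elim: e => //= [|a b c|a -> b ->|a IHa b IHb].
- by rewrite addr0.
- by rewrite addn1 !addn0 eqSS; do 2 case: ifP => _ /=; rewrite add0r.
- by rewrite addrACA.
- by rewrite IHa IHb; ring.
Qed.

Lemma pd_notin_vars i j k (f : E) : (i, j, k) \notin vars f -> eqv (pd i j k f) (Cst 0).
Proof.
move=> ijk J; elim: f ijk => //= [a b c|a IHa b IHb|a IHa b IHb].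
- by rewrite inE [(i, j, k) == _]eq_sym !xpair_eqE => /negbTE->.
- by rewrite mem_cat negb_or => /andP[/IHa-> /IHb->]; rewrite addr0.
- by rewrite mem_cat negb_or => /andP[/IHa-> /IHb->]; rewrite mul0r mulr0 addr0.
Qed.

Lemma xpoly_Dx_eq0_const (f : E) :
  xpoly f -> eqv (Dx f) (Cst 0) -> eqv f (Cst (eval jet0 f)).
Proof.
move=> f_x Df0.
have [N N_gt] : exists N, forall i j k, (i, j, k) \in vars f -> (i < N)%N.
  exists (\max_(s <- vars f) s.1.1).+1 => i j k ijk.
  by rewrite ltnS (@leq_bigmax_seq _ _ xpredT (fun s => s.1.1) _ ijk).
(* downward induction from the highest x-derivative occurring in [f] *)
have pd_x d i : (N <= i + d)%N -> eqv (pd i 0 0 f) (Cst 0).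
  elim: d i => [|d IHd] i Ni.
    by apply: pd_notin_vars; apply/negP => /N_gt; rewrite ltnNge -[i]addn0 Ni.
  have pd_next : eqv (pd i.+1 0 0 f) (Cst 0) by apply: IHd; rewrite addSnnS.
  move=> J; have := pd_Dx_succ i 0 0 f J.
  by rewrite (pd_eqv _ _ _ Df0 J) /= /Dx (Dtot_eqv _ _ _ pd_next J) /= add0r.
move=> J; apply: eval_const_of_pd_eq0 => i [|j] [|k].
- by apply: (pd_x N); rewrite leq_addl.
all: by apply: pd_notin_vars; apply/negP => /(xpoly_vars f_x) [].
Qed.

Lemma xpoly_eqv_Dx (a b : E) : xpoly a -> xpoly b ->
  eqv (Dx a) (Dx b) -> eval jet0 a = eval jet0 b -> eqv a b.
Proof.
move=> a_x b_x Dab ab0 J; apply/eqP; rewrite -subr_eq0 -eval_Sub; apply/eqP.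
have sub_x : xpoly (Defs.Sub a b) by rewrite /= a_x b_x.
have D_sub : eqv (Dx (Defs.Sub a b)) (Cst 0) by move=> J'; rewrite /= Dab /=; ring.
by rewrite (xpoly_Dx_eq0_const sub_x D_sub J) eval_Sub ab0 subrr.
Qed.

Definition lenard (f : E) : E :=
  Defs.Sub (Dx (Dx (Dx f)))
    (Add (Mul (Cst 4) (Mul (u_x R) (Dx f))) (Mul (Cst 2) (Mul (u_xx R) f))).

Definition wronsk (a b : E) : E := Defs.Sub (Mul a (Dx b)) (Mul b (Dx a)).

Definition flux (a b : E) : E := Add (Mul (Cst 2) (Mul (Dx a) (Dx b))) (Mul a (Dx (Dx b))).

Lemma lenard_eqv (e e' : E) : eqv e e' -> eqv (lenard e) (lenard e').
Proof.
move=> ee' J; have D1 := Dtot_eqv 1 0 0 ee'; have D2 := Dtot_eqv 1 0 0 D1.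
by rewrite /= ee' D1 (Dtot_eqv 1 0 0 D2).
Qed.

Lemma xpoly_lenard (e : E) : xpoly e -> xpoly (lenard e).
Proof. by move=> e_x; rewrite /= !xpoly_Dx ?e_x. Qed.

Lemma eval_Dx_scale r (e : E) (J : jetR) :
  eval J (Dx (Mul (Cst r) e)) = r * eval J (Dx e).
Proof. by rewrite /= mul0r add0r. Qed.

Lemma eval_lenard_scale r (e : E) (J : jetR) :
  eval J (lenard (Mul (Cst r) e)) = r * eval J (lenard e).
Proof. by rewrite /lenard /Dx /=; ring. Qed.

(* [Ev g] commutes with [Dx]; the extra terms come from the explicit [u_x], [u_xx] in [lenard]. *)
Lemma Ev_lenard (g e : E) (J : jetR) :
  eval J (Ev g (lenard e)) = eval J (lenard (Ev g e))
    - 4 * eval J (Dx g) * eval J (Dx e) - 2 * eval J (Dx (Dx g)) * eval J e.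
Proof.
have Ev_Dx3 : eqv (Ev g (Dx (Dx (Dx e)))) (Dx (Dx (Dx (Ev g e)))).
  move=> J'; rewrite Ev_Dx; apply: Dtot_eqv => J''; rewrite Ev_Dx; apply: Dtot_eqv.
  exact: Ev_Dx.
move: (Ev_Dx g e J) (Ev_Dx3 J); rewrite /lenard /Dx /= => -> ->; ring.
Qed.

(* Lenard's identity behind the commutativity: [lenard (wronsk b a)] is a total
   x-derivative up to boundary terms that telescope along the hierarchy. *)
Lemma lenard_wronsk (a a1 b b1 : E) (J : jetR) :
  eqv (Dx a1) (lenard a) -> eqv (Dx b1) (lenard b) ->
  eval J (lenard (wronsk b a)) =
  eval J (Dx (wronsk b a1)) + (eval J (flux a1 b) - eval J (flux a b1)).
Proof.
move=> Da1 Db1; have Da1' := Dtot_eqv 1 0 0 Da1 J; have Db1' := Dtot_eqv 1 0 0 Db1 J.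
move: (Da1 J) (Db1 J) Da1' Db1'; rewrite /lenard /wronsk /flux /Dx /=.
rewrite ?addn0 ?addn1 => -> -> -> ->; ring.
Qed.

Fixpoint bigAdd (f : nat -> E) (n : nat) : E :=
  if n is n'.+1 then Add (bigAdd f n') (f n') else Cst 0.

Lemma eval_bigAdd (f : nat -> E) n (J : jetR) :
  eval J (bigAdd f n) = \sum_(0 <= k < n) eval J (f k).
Proof. by elim: n => [|n IHn] /=; rewrite ?big_nil // big_nat_recr //= IHn. Qed.

Lemma Dx_bigAdd (f : nat -> E) n : Dx (bigAdd f n) = bigAdd (fun k => Dx (f k)) n.
Proof. by elim: n => //= n <-. Qed.

Lemma eval_lenard_bigAdd (f : nat -> E) n (J : jetR) :
  eval J (lenard (bigAdd f n)) = \sum_(0 <= k < n) eval J (lenard (f k)).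
Proof.
elim: n => [|n IHn]; first by rewrite big_nil /=; ring.
by rewrite big_nat_recr //= -IHn /=; ring.
Qed.

Lemma xpoly_bigAdd (f : nat -> E) n : (forall k, xpoly (f k)) -> xpoly (bigAdd f n).
Proof. by move=> f_x; elim: n => //= n ->; rewrite f_x. Qed.

Lemma xpoly_wronsk (a b : E) : xpoly a -> xpoly b -> xpoly (wronsk a b).
Proof. by move=> a_x b_x; rewrite /= a_x b_x !xpoly_Dx. Qed.

Lemma eval_wronsk_anti (a b : E) (J : jetR) : eval J (wronsk a b) = - eval J (wronsk b a).
Proof. by rewrite !eval_Sub opprB. Qed.

Lemma eval_jet0_wronsk (a b : E) : eval jet0 (wronsk a b) = 0.
Proof. by rewrite eval_Sub /= /Dx !eval_jet0_Dtot !mulr0 subrr. Qed.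

Section LenardSequence.
Variables (G : nat -> E) (c0 : R).
Hypothesis G0 : G 0%N = Cst c0.
Hypothesis xpoly_G : forall k, xpoly (G k).
Hypothesis Dx_G : forall k, eqv (Dx (G k.+1)) (lenard (G k)).
Hypothesis pd_u_G : forall k, eqv (pd 0 0 0 (G k)) (Cst 0).

Definition wsum (K L : nat) : E := bigAdd (fun k => wronsk (G (K + L - k.+1)) (G k)) K.

Lemma Dx_wsum K L :
  eqv (Dx (wsum K.+1 L)) (Defs.Sub (lenard (wsum K L)) (flux (G K) (G L))).
Proof.
move=> J; rewrite eval_Sub /wsum Dx_bigAdd eval_bigAdd eval_lenard_bigAdd.
set A := \sum_(0 <= k < K) eval J (Dx (wronsk (G (K + L - k.+1)) (G k.+1))).
set F := fun k => eval J (flux (G k) (G (K + L - k))).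
have tel : \sum_(0 <= k < K) eval J (lenard (wronsk (G (K + L - k.+1)) (G k))) - A
           = F K - F 0%N.
  rewrite -sumrB; apply: telescope_sumr_eq => // k /andP[_ kK].
  rewrite (lenard_wronsk J (Dx_G k) (Dx_G (K + L - k.+1))) /F.
  rewrite (_ : (K + L - k.+1).+1 = K + L - k)%N; last lia.
  by rewrite addrAC subrr add0r.
have head_term : eval J (Dx (wronsk (G (K + L)) (G 0))) = - F 0%N.
  by rewrite /F subn0 G0 /wronsk /flux /Dx /=; ring.
rewrite big_nat_recl //; under eq_bigr do rewrite addSn subSS.
rewrite addSn subSS subn0 head_term -/A.
move/eqP: tel; rewrite subr_eq => /eqP->; rewrite /F addKn; ring.
Qed.

Lemma Ev_G_wsum K L : eqv (Ev (G L) (G K)) (Mul (Cst 2) (wsum K L)).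
Proof.
elim: K => [|K IHK]; first by move=> J; rewrite G0 /= mulr0.
apply: xpoly_eqv_Dx.
- by apply: xpoly_Ev.
- have wsum_x : xpoly (wsum K.+1 L).
    by apply: xpoly_bigAdd => k; apply: xpoly_wronsk.
  by apply/andP; split; last exact: wsum_x.
- move=> J; rewrite -(Ev_Dx _ _ J) (Ev_eqv_r _ (Dx_G K) J) Ev_lenard.
  rewrite (lenard_eqv IHK J) !eval_lenard_scale eval_Dx_scale (Dx_wsum K L J) eval_Sub.
  by rewrite /flux /Dx /=; ring.
- have wsum0 : eval jet0 (wsum K.+1 L) = 0.
    by rewrite /wsum eval_bigAdd big1 // => k _; apply: eval_jet0_wronsk.
  by move: wsum0; rewrite eval_jet0_Ev (pd_u_G _ jet0) /= => ->; rewrite !mulr0.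
Qed.

Lemma wsum_sym K L : eqv (wsum K L) (wsum L K).
Proof.
wlog KL : K L / (K <= L)%N => [hwlog|J].
  by case: (leqP K L) => [/hwlog//|/ltnW/hwlog KL J]; rewrite KL.
rewrite /wsum !eval_bigAdd (big_cat_nat (leq0n K) KL) [(L + K)%N]addnC.
set M := \sum_(K <= k < L) _.
suff M0 : M = 0 by rewrite M0 Monoid.mulm1.
have : M = - M.
  rewrite {1}/M big_nat_rev -sumrN; apply: eq_big_nat => k /andP[Kk kL].
  by rewrite (_ : (K + L - (K + L - k.+1).+1 = k)%N) 1?eval_wronsk_anti //; lia.
by move/eqP; rewrite -addr_eq0 -mulr2n mulrn_eq0 /= => /eqP.
Qed.

Lemma Ev_G_comm K L : eqv (Ev (G L) (G K)) (Ev (G K) (G L)).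
Proof. by move=> J; rewrite !Ev_G_wsum /= wsum_sym. Qed.

End LenardSequence.

(* It lies on the solutions because every monomial of every
   [D_sigma Eqn] contains a factor [u_{x^i y^j t^k}] with [j > 0] or [i, k > 0]. *)
Definition sol_jet (J : jetR) (h : R) : jetR :=
  fun i j k => if (j == 0%N) && (k == 0%N) then J i 0%N 0%N
               else if (i == 0%N) && (j == 0%N) && (k == 1%N) then h else 0.

Fixpoint in_mixed_ideal (e : E) : bool :=
  match e with
  | Cst _ => false
  | Var i j k => (0 < j)%N || (0 < i)%N && (0 < k)%N
  | Add a b => in_mixed_ideal a && in_mixed_ideal b
  | Mul a b => in_mixed_ideal a || in_mixed_ideal b
  end.

Lemma eval_sol_jet_mixed (J : jetR) h (e : E) :
  in_mixed_ideal e -> eval (sol_jet J h) e = 0.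
Proof.
elim: e => //= [i j k|a IHa b IHb|a IHa b IHb].
- rewrite /sol_jet; case/orP => [j_gt0|/andP[i_gt0 k_gt0]].
    by rewrite (negbTE (lt0n_neq0 j_gt0)) /= andbF.
  by rewrite (negbTE (lt0n_neq0 k_gt0)) (negbTE (lt0n_neq0 i_gt0)) andbF.
- by case/andP => /IHa-> /IHb->; rewrite addr0.
- by case/orP => [/IHa->|/IHb->]; rewrite ?mul0r ?mulr0.
Qed.

Lemma in_mixed_ideal_Dtot dx dy dt (e : E) :
  in_mixed_ideal e -> in_mixed_ideal (Dtot dx dy dt e).
Proof.
elim: e => //= [i j k|a IHa b IHb|a IHa b IHb].
- case/orP => [j_gt0|/andP[i_gt0 k_gt0]]; first by rewrite addn_gt0 j_gt0.
  by rewrite !addn_gt0 i_gt0 k_gt0 orbT.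
- by case/andP => /IHa-> /IHb->.
- by case/orP => [a_in|b_in]; [rewrite (IHa a_in) a_in | rewrite (IHb b_in) b_in !orbT].
Qed.

Lemma sol_jet_on_solutions (J : jetR) h : on_solutions (sol_jet J h).
Proof.
move=> i j k; apply: eval_sol_jet_mixed; rewrite /Dsig.
elim: i => [|i IHi] /=; last exact: in_mixed_ideal_Dtot.
elim: j => [|j IHj] /=; last exact: in_mixed_ideal_Dtot.
by elim: k => [|k IHk] //=; apply: in_mixed_ideal_Dtot.
Qed.

Lemma eval_sol_jet_xpoly (J : jetR) h (e : E) : xpoly e -> eval (sol_jet J h) e = eval J e.
Proof. by move=> e_x; apply: xpoly_x_only. Qed.

Lemma eval_sol_jet_Dy (J : jetR) h (e : E) : xpoly e -> eval (sol_jet J h) (Dy e) = 0.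
Proof.
rewrite /Dy; elim: e => //= [i j k|a IHa b IHb|a IHa b IHb].
- by case/andP => /eqP-> /eqP->; rewrite /sol_jet /= andbF.
- by case/andP => /IHa-> /IHb->; rewrite addr0.
- by case/andP => /IHa-> /IHb->; rewrite mul0r mulr0 addr0.
Qed.

Lemma eval_sol_jet_Dt (J : jetR) h (e : E) :
  xpoly e -> eval (sol_jet J h) (Dt e) = eval J (pd 0 0 0 e) * h.
Proof.
move=> e_x; rewrite -(eval_sol_jet_xpoly J h (xpoly_pd 0 0 0 e_x)) /Dt.
elim: e e_x => /= [c|i j k|a IHa b IHb|a IHa b IHb].
- by rewrite mul0r.
- case/andP => /eqP-> /eqP->; rewrite /sol_jet /= !addn0 add0n.
  by case: (i == 0%N); rewrite ?mul1r ?mul0r.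
- by case/andP => /IHa-> /IHb->; rewrite mulrDl.
- by case/andP => /IHa-> /IHb->; rewrite mulrDl [_ * h * _]mulrAC !mulrA.
Qed.

Section Hierarchy.
Variable chi : nat -> E.
Hypothesis chi0 : forall J : jetR, eval J (chi 0%N) = eval J (u_x R).
Hypothesis chi_x_only : forall k, x_only (chi k).
Hypothesis chi_R0 : forall k, R0_rel (chi k) (Opp (chi k.+1)).

Let chi_eqv k : eqv (chi k) (xproj (chi k)) := x_only_eqv_xproj (chi_x_only k).

Lemma Dx_xproj_succ k : eqv (Dx (xproj (chi k.+1))) (lenard (xproj (chi k))).
Proof.
move=> J; have H := (chi_R0 k).1 _ (sol_jet_on_solutions J 0).
rewrite -[LHS](eval_sol_jet_xpoly J 0) ?xpoly_Dx ?xpoly_xproj //.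
rewrite -[RHS](eval_sol_jet_xpoly J 0) ?xpoly_lenard ?xpoly_xproj //.
rewrite -(Dtot_eqv 1 0 0 (chi_eqv k.+1)) -(lenard_eqv (chi_eqv k)).
move: H; rewrite /lenard /Opp /Dx /=; set J' := sol_jet J 0 => H.
have -> : eval J' (Dtot 1 0 0 (chi k.+1)) =
          - (0 * eval J' (chi k.+1) + -1 * eval J' (Dtot 1 0 0 (chi k.+1))) by ring.
by rewrite H; ring.
Qed.

Lemma pd_u_xproj k : eqv (pd 0 0 0 (xproj (chi k))) (Cst 0).
Proof.
(* on [sol_jet J 1] the y-half of [R_0] collapses to [0 = D_t chi_k = d chi_k / du] *)
move=> J; have := (chi_R0 k).2 _ (sol_jet_on_solutions J 1).
rewrite /Opp /Dy /Dt /Dx /= (Dtot_eqv 0 1 0 (chi_eqv k.+1)) (Dtot_eqv 0 0 1 (chi_eqv k)).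
rewrite eval_sol_jet_Dy ?eval_sol_jet_Dt ?xpoly_xproj //.
rewrite [sol_jet J 1 0 1 0]/sol_jet [sol_jet J 1 1 1 0]/sol_jet /=.
by rewrite !mul0r !mulr0 mulr1 !addr0 => <-.
Qed.

(* [lenard (Cst c) = -2 c u_xx], so [c = -1/2] lets [chi_0 = u_x] continue the recursion. *)
Definition lenard_seq k : E := if k is k'.+1 then xproj (chi k') else Cst (- 2^-1).

Lemma xproj_Ev_comm i j :
  eqv (Ev (xproj (chi i)) (xproj (chi j))) (Ev (xproj (chi j)) (xproj (chi i))).
Proof.
apply: (@Ev_G_comm lenard_seq (- 2^-1) erefl _ _ _ j.+1 i.+1).
- by case=> [|k] //; apply: xpoly_xproj.
- case=> [|k]; last exact: Dx_xproj_succ.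
  move=> J; rewrite -(Dtot_eqv 1 0 0 (chi_eqv 0)) (Dtot_eqv 1 0 0 chi0) /lenard /Dx /=.
  by rewrite addn1 !addn0; field.
- by case=> [|k] //; apply: pd_u_xproj.
Qed.

End Hierarchy.

End Jets.

Theorem proposition3 (R : realFieldType) (chi : nat -> dexp R) :
  (forall J : jet R, eval J (chi 0%N) = eval J (u_x R)) ->
  (forall k, x_only (chi k)) ->
  (forall k, R0_rel (chi k) (Opp (chi k.+1))) ->
  forall (i j : nat) (J : jet R), eval J (jacobi (chi i) (chi j)) = 0.
Proof.
move=> chi0 chi_x_only chi_R0 i j J.
have chi_eqv k := x_only_eqv_xproj (chi_x_only k).
rewrite eval_jacobi (Ev_eqv_l _ (chi_eqv i) J) (Ev_eqv_r _ (chi_eqv j) J).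
rewrite (Ev_eqv_l _ (chi_eqv j) J) (Ev_eqv_r _ (chi_eqv i) J).
by rewrite (xproj_Ev_comm chi0 chi_x_only chi_R0 i j J) subrr.
Qed.
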